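(* Let $G$ be a discrete group and $X$ a minimal $G$-flow, and suppose there is an infinite subgroup $H\le G$ such that the restricted action $H\curvearrowright X$ is equicontinuous. Then $X$ has the separated covering property.
   Context: A $G$-flow is a compact Hausdorff space with an action of $G$ by homeomorphisms; it is minimal if every orbit is dense. An action $H\curvearrowright X$ is equicontinuous if for every neighborhood $U$ of the diagonal in $X\times X$ there is a neighborhood $V$ of the diagonal such that $(x,y)\in V$ implies $(hx,hy)\in U$ for all $h\in H$. For finite $D\subseteq G$, a set $S\subseteq G$ is $D$-separated if $Dg\cap Dh=\emptyset$ for distinct $g,h\in S$. A minimal $G$-flow has the separated covering property if for every finite $D\subseteq G$ and non-empty open $U$ there is a $D$-separated $S\subseteq G$ with $S^{-1}U=X$. *)

From Stdlib Require Import List.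
Import ListNotations.
Set Implicit Arguments.

Record Group := {
  gcar :> Type;
  gmul : gcar -> gcar -> gcar;
  gone : gcar;
  ginv : gcar -> gcar;
  gmulA : forall a b c, gmul a (gmul b c) = gmul (gmul a b) c;
  gmul1l : forall a, gmul gone a = a;
  gmul1r : forall a, gmul a gone = a;
  gmulVl : forall a, gmul (ginv a) a = gone;
  gmulVr : forall a, gmul a (ginv a) = gone
}.

Definition is_subgroup (G : Group) (H : G -> Prop) : Prop :=
  H (gone G) /\ (forall a b, H a -> H b -> H (gmul G a b)) /\
  (forall a, H a -> H (ginv G a)).

Definition infinite_set (T : Type) (H : T -> Prop) : Prop :=
  forall l : list T, exists h, H h /\ ~ In h l.

Record Topology (X : Type) := {
  is_open : (X -> Prop) -> Prop;
  open_full : is_open (fun _ => True);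
  open_union : forall (I : Type) (F : I -> X -> Prop),
      (forall i, is_open (F i)) -> is_open (fun x => exists i, F i x);
  open_inter : forall U V, is_open U -> is_open V ->
      is_open (fun x => U x /\ V x)
}.

Definition compact (X : Type) (t : Topology X) : Prop :=
  forall (I : Type) (F : I -> X -> Prop),
    (forall i, is_open t (F i)) -> (forall x, exists i, F i x) ->
    exists l : list I, forall x, exists i, In i l /\ F i x.

Definition hausdorff (X : Type) (t : Topology X) : Prop :=
  forall x y : X, x <> y -> exists U V,
    is_open t U /\ is_open t V /\ U x /\ V y /\ (forall z, ~ (U z /\ V z)).

Definition continuous (X : Type) (t : Topology X) (f : X -> X) : Prop :=
  forall U, is_open t U -> is_open t (fun x => U (f x)).

Definition prod_open (X : Type) (t : Topology X) (W : X -> X -> Prop) : Prop :=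
  forall x y, W x y -> exists A B, is_open t A /\ is_open t B /\ A x /\ B y /\
    (forall a b, A a -> B b -> W a b).

Definition diag_nbhd (X : Type) (t : Topology X) (U : X -> X -> Prop) : Prop :=
  exists W, prod_open t W /\ (forall x, W x x) /\ (forall x y, W x y -> U x y).

(* A G-flow: compact Hausdorff space with an action by homeomorphisms
   (each act g is continuous, with continuous inverse act g^-1). *)
Definition is_flow (G : Group) (X : Type) (t : Topology X) (act : G -> X -> X)
  : Prop :=
  compact t /\ hausdorff t /\
  (forall x, act (gone G) x = x) /\
  (forall g h x, act (gmul G g h) x = act g (act h x)) /\
  (forall g, continuous t (act g)).

Definition minimal_flow (G : Group) (X : Type) (t : Topology X)
  (act : G -> X -> X) : Prop :=
  forall (x : X) (U : X -> Prop), is_open t U -> (exists y, U y) ->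
    exists g, U (act g x).

Definition equicontinuous_on (G : Group) (X : Type) (t : Topology X)
  (act : G -> X -> X) (H : G -> Prop) : Prop :=
  forall U, diag_nbhd t U -> exists V, diag_nbhd t V /\
    forall x y, V x y -> forall h, H h -> U (act h x) (act h y).

Definition separated (G : Group) (D : list G) (S : G -> Prop) : Prop :=
  forall g h, S g -> S h -> g <> h ->
    forall d1 d2, In d1 D -> In d2 D -> gmul G d1 g <> gmul G d2 h.

(* separated covering property; S^{-1} U = X means every x lies in
   s^{-1} U for some s in S, i.e. act s x \in U *)
Definition separated_covering (G : Group) (X : Type) (t : Topology X)
  (act : G -> X -> X) : Prop :=
  forall (D : list G) (U : X -> Prop), is_open t U -> (exists y, U y) ->
    exists S : G -> Prop, @separated G D S /\
      forall x, exists s, S s /\ U (act s x).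

Arguments is_flow {G X} t act.
Arguments minimal_flow {G X} t act.
Arguments equicontinuous_on {G X} t act H.
Arguments separated_covering {G X} t act.
Arguments is_subgroup {G} H.
Arguments separated {G} D S.

(* Fix a non-empty open U, a point y of U and a finite D ⊆ G.
   (1) Equicontinuity of H, applied to the Hausdorff "point entourage"
       W(U,y) = (U×U) ∪ ((X∖y)×(X∖y)), yields an H-invariant
       neighbourhood E of the diagonal: E(k·y, z) with k ∈ H forces
       k⁻¹·z ∈ U.
   (2) Returns are infinite: y comes back into any neighbourhood of itself
       under infinitely many h ∈ H.  Otherwise, covering the compact X by
       finitely many E-small sets, the returns of H into each of them would
       lie in a translate of a finite list, so H would be finite.
   (3) Consequently there is an open B ∋ y and infinitely many h ∈ H with
       h·B ⊆ U.
   (4) By minimality and compactness, finitely many translates g⁻¹B cover X.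
   (5) A purely group-theoretic selection picks, for each such g, an element
       s = h g with h·B ⊆ U avoiding the finitely many elements d₁⁻¹d₂s' that
       would break D-separation; these s form the required separated set. *)

From Stdlib Require Import List Classical.
Set Implicit Arguments.
Unset Strict Implicit.

Lemma finite_union (A B : Type) (Q : A -> B -> Prop) (l : list A) :
  (forall a, In a l -> exists M, forall b, Q a b -> In b M) ->
  exists M, forall a b, In a l -> Q a b -> In b M.
Proof.
  induction l as [|a l IH]; intro Hfin.
  - exists nil; intros a b [].
  - destruct (Hfin a (or_introl eq_refl)) as [Ma HMa].
    destruct IH as [Ml HMl]; [intros a' Ha'; apply Hfin; right; exact Ha'|].
    exists (Ma ++ Ml). intros a' b [<-|Ha'] Hq; apply in_or_app; eauto.
Qed.

Section GroupLemmas.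
Variable G : Group.

Lemma ginv_involutive (a : G) : ginv G (ginv G a) = a.
Proof.
  rewrite <- (gmul1r G (ginv G (ginv G a))), <- (gmulVl G a).
  rewrite gmulA, gmulVl, gmul1l. reflexivity.
Qed.

Lemma gmul_inv_cancel_l (a b : G) : gmul G a (gmul G (ginv G a) b) = b.
Proof. rewrite gmulA, gmulVr, gmul1l. reflexivity. Qed.

Lemma gmul_inv_cancel_r (a b : G) : gmul G (gmul G a b) (ginv G b) = a.
Proof. rewrite <- gmulA, gmulVr, gmul1r. reflexivity. Qed.

Lemma gmul_solve_l (d1 d2 s h : G) :
  gmul G d1 s = gmul G d2 h -> s = gmul G (ginv G d1) (gmul G d2 h).
Proof. intro E. rewrite <- E, gmulA, gmulVl, gmul1l. reflexivity. Qed.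

(* Elements whose addition to Sl would violate D-separation: d₁⁻¹ d₂ s'. *)
Definition forbidden (D Sl : list G) : list G :=
  flat_map (fun s' => flat_map (fun d1 =>
    map (fun d2 => gmul G (ginv G d1) (gmul G d2 s')) D) D) Sl.

Lemma in_forbidden (D Sl : list G) (s' d1 d2 : G) :
  In s' Sl -> In d1 D -> In d2 D ->
  In (gmul G (ginv G d1) (gmul G d2 s')) (forbidden D Sl).
Proof.
  intros Hs Hd1 Hd2. apply in_flat_map; exists s'; split; [exact Hs|].
  apply in_flat_map; exists d1; split; [exact Hd1|].
  apply (in_map (fun d2 => gmul G (ginv G d1) (gmul G d2 s'))); exact Hd2.
Qed.

Lemma separated_cons (D Sl : list G) (s : G) :
  separated D (fun g => In g Sl) -> ~ In s (forbidden D Sl) ->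
  separated D (fun g => In g (s :: Sl)).
Proof.
  intros Hsep Hs g1 g2 [<-|I1] [<-|I2] Hne d1 d2 Hd1 Hd2 Heqd.
  - apply Hne; reflexivity.
  - apply Hs. rewrite (gmul_solve_l Heqd). apply in_forbidden; assumption.
  - apply Hs. symmetry in Heqd. rewrite (gmul_solve_l Heqd).
    apply in_forbidden; assumption.
  - exact (Hsep _ _ I1 I2 Hne d1 d2 Hd1 Hd2 Heqd).
Qed.

Lemma fresh_right_translate (P : G -> Prop) :
  (forall L, exists h, P h /\ ~ In h L) ->
  forall (L : list G) (f : G), exists h, P h /\ ~ In (gmul G h f) L.
Proof.
  intros Hfresh L f.
  destruct (Hfresh (map (fun l => gmul G l (ginv G f)) L)) as [h [Ph Hn]].
  exists h; split; [exact Ph|]. intro Hin; apply Hn.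
  rewrite <- (gmul_inv_cancel_r h f).
  apply (in_map (fun l => gmul G l (ginv G f))); exact Hin.
Qed.

Lemma separated_selection (D Fl : list G) (P : G -> Prop) :
  (forall L, exists h, P h /\ ~ In h L) ->
  exists Sl, separated D (fun s => In s Sl) /\
    forall g, In g Fl -> exists s, In s Sl /\ exists h, P h /\ s = gmul G h g.
Proof.
  intro Hfresh. induction Fl as [|f Fl IH].
  - exists nil; split; [intros g h []|intros g []].
  - destruct IH as [Sl [Hsep Hcov]].
    destruct (fresh_right_translate Hfresh (forbidden D Sl) f) as [h [Ph Hn]].
    exists (gmul G h f :: Sl); split.
    + apply separated_cons; assumption.
    + intros g [<-|Hg].
      * exists (gmul G h f); split; [left; reflexivity|eauto].
      * destruct (Hcov g Hg) as [s [Hs Hsh]].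
        exists s; split; [right; exact Hs|exact Hsh].
Qed.

End GroupLemmas.

Section TopologyLemmas.
Variables (X : Type) (t : Topology X).

Definition point_entourage (U : X -> Prop) (y : X) (a b : X) : Prop :=
  (U a /\ U b) \/ (a <> y /\ b <> y).

Lemma point_entourage_center (U : X -> Prop) (y b : X) :
  point_entourage U y y b -> U b.
Proof. intros [[_ Ub]|[Hy _]]; [exact Ub|contradiction Hy; reflexivity]. Qed.

Lemma point_entourage_diag (U : X -> Prop) (y : X) :
  hausdorff t -> is_open t U -> U y -> diag_nbhd t (point_entourage U y).
Proof.
  intros Hh HU Uy. exists (point_entourage U y). split; [|split; [|auto]].
  - intros a b [[Ua Ub]|[Na Nb]].
    + exists U, U; repeat split; auto.
      intros a' b' Ua' Ub'; left; split; assumption.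
    + destruct (Hh a y Na) as [A1 [V1 [HA1 [HV1 [A1a [V1y D1]]]]]].
      destruct (Hh b y Nb) as [B1 [V2 [HB1 [HV2 [B1b [V2y D2]]]]]].
      exists A1, B1; repeat split; auto.
      intros a' b' Aa Bb. right. split; intros ->.
      * exact (D1 y (conj Aa V1y)).
      * exact (D2 y (conj Bb V2y)).
  - intro x. destruct (classic (U x)) as [Ux|Nx]; [left; auto|right].
    split; intros ->; contradiction.
Qed.

Lemma compact_small_cover (E : X -> X -> Prop) :
  compact t -> diag_nbhd t E ->
  exists Cs : list (X -> Prop),
    (forall C, In C Cs -> forall a b, C a -> C b -> E a b) /\
    forall x, exists C, In C Cs /\ C x.
Proof.
  intros Hc [W [Wo [Wd WE]]].
  set (small := fun C : X -> Prop => is_open t C /\ forall a b, C a -> C b -> E a b).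
  destruct (Hc {C | small C} (@proj1_sig _ small)) as [cs Hcs].
  - intro C; exact (proj1 (proj2_sig C)).
  - intro x. destruct (Wo x x (Wd x)) as [A [B [HA [HB [Ax [Bx HAB]]]]]].
    exists (exist small (fun z => A z /\ B z)
      (conj (open_inter t _ _ HA HB)
            (fun a b Ha Hb => WE _ _ (HAB a b (proj1 Ha) (proj2 Hb))))).
    split; assumption.
  - exists (map (@proj1_sig _ small) cs); split.
    + intros C HC. apply in_map_iff in HC as [[C' HC'] [<- _]]. exact (proj2 HC').
    + intro x. destruct (Hcs x) as [c [Hc' Cx]].
      exists (proj1_sig c); split; [apply in_map; exact Hc'|exact Cx].
Qed.

End TopologyLemmas.

Section Flows.
Variables (G : Group) (X : Type) (t : Topology X) (act : G -> X -> X).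
Hypothesis act_one : forall x, act (gone G) x = x.
Hypothesis act_mul : forall g h x, act (gmul G g h) x = act g (act h x).

Lemma minimal_finite_cover (B : X -> Prop) :
  compact t -> (forall g, continuous t (act g)) -> minimal_flow t act ->
  is_open t B -> (exists y, B y) ->
  exists Fl : list G, forall x, exists g, In g Fl /\ B (act g x).
Proof.
  intros Hc Hcont Hmin HB [y By].
  apply (Hc G (fun g x => B (act g x))).
  - intro g; exact (Hcont g B HB).
  - intro x; exact (Hmin x B HB (ex_intro _ y By)).
Qed.

Variable H : G -> Prop.
Hypothesis H_sub : is_subgroup H.
Hypothesis H_inf : infinite_set H.
Hypothesis H_equi : equicontinuous_on t act H.
Hypothesis X_compact : compact t.
Hypothesis X_hausdorff : hausdorff t.

Lemma invariant_entourage (A : X -> Prop) (y : X) :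
  is_open t A -> A y ->
  exists E, diag_nbhd t E /\
    forall k z, H k -> E (act k y) z -> A (act (ginv G k) z).
Proof.
  intros HA Ay.
  destruct (H_equi (point_entourage_diag X_hausdorff HA Ay)) as [E [HE Hinv]].
  exists E; split; [exact HE|]. intros k z Hk Ekz.
  pose proof (Hinv _ _ Ekz (ginv G k) (proj2 (proj2 H_sub) k Hk)) as Hw.
  rewrite <- act_mul, gmulVl, act_one in Hw.
  exact (point_entourage_center Hw).
Qed.

Lemma returns_infinite (A : X -> Prop) (y : X) :
  is_open t A -> A y ->
  forall L, exists k, H k /\ ~ In k L /\ A (act k y).
Proof.
  intros HA Ay L. apply NNPP; intro Hno.
  assert (HL : forall k, H k -> A (act k y) -> In k L).
  { intros k Hk Ak; apply NNPP; intro Hk'; apply Hno; eauto. }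
  destruct (invariant_entourage HA Ay) as [E [HE Hret]].
  destruct (compact_small_cover X_compact HE) as [Cs [Hsmall Hcov]].
  destruct (@finite_union _ _ (fun C h => H h /\ C (act h y)) Cs) as [M HM].
  - (* returns into an E-small C lie in h₀ L for any one return h₀ *)
    intros C HC.
    destruct (classic (exists h0, H h0 /\ C (act h0 y))) as [[h0 [Hh0 Ch0]]|Hnone].
    + exists (map (gmul G h0) L). intros h [Hh Ch].
      rewrite <- (gmul_inv_cancel_l h0 h). apply in_map, HL.
      * exact (proj1 (proj2 H_sub) _ _ (proj2 (proj2 H_sub) _ Hh0) Hh).
      * rewrite act_mul. exact (Hret h0 _ Hh0 (Hsmall C HC _ _ Ch0 Ch)).
    + exists nil. intros h Hh. exact (Hnone (ex_intro _ h Hh)).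
  - destruct (H_inf M) as [h [Hh Hn]].
    destruct (Hcov (act h y)) as [C [HC Ch]].
    exact (Hn (HM C h HC (conj Hh Ch))).
Qed.

Lemma uniform_return (U : X -> Prop) (y : X) :
  is_open t U -> U y ->
  exists B, is_open t B /\ B y /\
    forall L, exists h, (forall b, B b -> U (act h b)) /\ ~ In h L.
Proof.
  intros HU Uy.
  destruct (invariant_entourage HU Uy) as [E [[W [Wo [Wd WE]]] Hret]].
  destruct (Wo y y (Wd y)) as [A1 [B1 [HA1 [HB1 [A1y [B1y HAB]]]]]].
  exists B1; split; [exact HB1|split; [exact B1y|]]. intro L.
  destruct (returns_infinite HA1 A1y (map (ginv G) L)) as [k [Hk [Hn Ak]]].
  exists (ginv G k); split.
  - intros b Bb. exact (Hret k b Hk (WE _ _ (HAB _ _ Ak Bb))).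
  - intro Hin; apply Hn. rewrite <- (ginv_involutive k). apply in_map; exact Hin.
Qed.

End Flows.

Theorem lemma3p1 (G : Group) (X : Type) (t : Topology X) (act : G -> X -> X)
  (Hflow : is_flow t act) (Hmin : minimal_flow t act)
  (H : G -> Prop) (Hsub : is_subgroup H) (Hinf : infinite_set H)
  (Heq : equicontinuous_on t act H) :
  separated_covering t act.
Proof.
  destruct Hflow as [Hc [Hh [Hact1 [HactM Hcont]]]].
  intros D U HU [y Uy].
  destruct (uniform_return Hact1 HactM Hsub Hinf Heq Hc Hh HU Uy)
    as [B [HB [By Hret]]].
  destruct (minimal_finite_cover Hc Hcont Hmin HB (ex_intro _ y By)) as [Fl HFl].
  destruct (separated_selection D Fl Hret) as [Sl [Hsep Hcov]].
  exists (fun s => In s Sl); split; [exact Hsep|].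
  intro x. destruct (HFl x) as [g [Hg Bg]].
  destruct (Hcov g Hg) as [s [Hs [h [HhU ->]]]].
  exists (gmul G h g); split; [exact Hs|].
  rewrite HactM. exact (HhU _ Bg).
Qed.
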